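(* With $\mathsf{M}$, $\widehat{\mathsf{M}}$, $\mathbb{F}$, $\mathsf{2}$ and $g\colon\mathsf{M}\to\mathsf{2}^{\mathbb{N}\times\mathbb{F}}$ as in the context, the function $e_{\mathsf{M}}\colon\mathsf{M}\to\widehat{\mathsf{M}}\times\mathsf{2}^{\mathbb{N}\times\mathbb{F}}$, $e_{\mathsf{M}}(x)=(x,g(x))$, is injective and continuous.
   Context: $M_i = \{ j\cdot 2^{-i} \mid j \in \{0,\dots,2^i\}\}$; $\widehat{\mathsf{M}}=\prod_i\mathsf{M}_i$ with each $\mathsf{M}_i$ the discrete space on $M_i$; $\mathsf{M}$ is the subspace of $\ell_1$ (real sequences with finite $1$-norm, metric $\|x-y\|_1$) with underlying set $\{x\in\prod_i M_i:\sum_i|x(i)|<\infty\}$. The countable fan $\mathbb{F}$ is $\mathbb{N}^2\cup\{(\infty,\infty)\}$ with metric $d((a,b),(\infty,\infty))=2^{-a}$, $d((a,b),(a',b'))=\max\{2^{-a},2^{-a'}\}$ for distinct points of $\mathbb{N}^2$. $\mathsf{2}=\{\mathtt{0},\mathtt{1}\}$ is discrete. $f(x,k,a,b)=\mathtt{0}$ if $\sum_{i=a}^{a+b}x(i)\le 2^{-k}$, else $\mathtt{1}$; $g(y)(k,a,b)=f(y,k,a,b)$ and $g(y)(k,\infty,\infty)=\mathtt{0}$. Products and exponentials are formed in the category QCB (products: sequentialisation of product topology; exponentials: continuous maps with the sequentialisation of the compact-open topology). *)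

From HB Require Import structures.
From mathcomp Require Import all_boot all_order all_algebra.
From mathcomp Require Import all_classical all_reals all_analysis.
Import Order.TTheory GRing.Theory Num.Theory.
Unset Printing Implicit Defensive.
Local Open Scope classical_set_scope.
Local Open Scope ring_scope.

Definition topo (T : Type) := set (set T).

Definition cont {S T : Type} (tS : topo S) (tT : topo T) (f : S -> T) : Prop :=
  forall V, tT V -> tS (f @^-1` V).

Definition discrete (T : Type) : topo T := setT.

Definition seq_conv {T : Type} (t : topo T) (s : nat -> T) (x : T) : Prop :=
  forall U, t U -> U x -> exists N, forall n, (N <= n)%N -> U (s n).

Definition seqz {T : Type} (t : topo T) : topo T :=
  [set U | forall (s : nat -> T) (x : T), seq_conv t s x -> U x ->
     exists N, forall n, (N <= n)%N -> U (s n)].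

Definition gen_topo {T : Type} (B : set (set T)) : topo T :=
  [set U | forall x, U x -> exists F : set (set T),
     [/\ finite_set F, F `<=` B, (forall V, F V -> V x) &
         (forall y, (forall V, F V -> V y) -> U y)]].

Definition prod_topo {S T : Type} (tS : topo S) (tT : topo T) : topo (S * T) :=
  [set W | forall p, W p -> exists U V,
     [/\ tS U, tT V, U p.1, V p.2 & (forall q, U q.1 -> V q.2 -> W q)]].

Definition metric_topo {R : realType} {T : Type} (d : T -> T -> R) : topo T :=
  [set U | forall x, U x -> exists e : R, 0 < e /\ forall y, d x y < e -> U y].

Definition compact_in {T : Type} (t : topo T) (K : set T) : Prop :=
  forall C : set (set T), C `<=` t -> K `<=` \bigcup_(U in C) U ->
    exists D : set (set T), [/\ D `<=` C, finite_set D & K `<=` \bigcup_(U in D) U].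

(** * QCB exponential: continuous maps with the sequentialised compact-open topology *)
Definition CX {X Y : Type} (tX : topo X) (tY : topo Y) :=
  {h : X -> Y | cont tX tY h}.

Definition co_subbasis {X Y : Type} (tX : topo X) (tY : topo Y) : set (set (CX tX tY)) :=
  [set W | exists K U, [/\ compact_in tX K, tY U &
     W = [set h : CX tX tY | forall x, K x -> U (proj1_sig h x)]]].

Definition exp_topo {X Y : Type} (tX : topo X) (tY : topo Y) : topo (CX tX tY) :=
  seqz (gen_topo (co_subbasis tX tY)).

Definition qcb_prod {S T : Type} (tS : topo S) (tT : topo T) : topo (S * T) :=
  seqz (prod_topo tS tT).

(** * The countable fan F = N^2 ∪ {(∞,∞)}; [None] is (∞,∞). *)
Definition Fan := option (nat * nat).

Definition dF {R : realType} (p q : Fan) : R :=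
  match p, q with
  | None, None => 0
  | Some (a, _), None => (2%:R : R) ^- a
  | None, Some (a, _) => (2%:R : R) ^- a
  | Some (a, b), Some (a', b') =>
      if (a, b) == (a', b') then 0 else Num.max ((2%:R : R) ^- a) ((2%:R : R) ^- a')
  end.

Definition Fan_topo (R : realType) : topo Fan := metric_topo (@dF R).

Definition NF_topo (R : realType) : topo (nat * Fan) :=
  qcb_prod (discrete nat) (Fan_topo R).

(** 2 = {0,1} discrete, encoded as bool with 0 = false, 1 = true *)
Definition two_topo : topo bool := discrete bool.

Definition inMi {R : realType} (i : nat) (r : R) : Prop :=
  exists j : nat, (j <= 2 ^ i)%N /\ r = j%:R / (2%:R : R) ^+ i.

Definition l1norm {R : realType} (x : nat -> R) : \bar R :=
  (\sum_(0 <= i <oo) (`|x i|)%:E)%E.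

Definition Mset {R : realType} (x : nat -> R) : Prop :=
  (forall i, inMi i (x i)) /\ (l1norm x < +oo)%E.

Definition Mt (R : realType) := {x : nat -> R | Mset x}.

Definition dM {R : realType} (x y : Mt R) : R :=
  fine (l1norm (fun i => proj1_sig x i - proj1_sig y i)).

Definition M_topo (R : realType) : topo (Mt R) := metric_topo (@dM R).

Definition Mhat (R : realType) := {x : nat -> R | forall i, inMi i (x i)}.

(** Tychonoff product of the discrete spaces M_i: subbasis = preimages under
    coordinate projections of (arbitrary) subsets of M_i *)
Definition Mhat_tych (R : realType) : topo (Mhat R) :=
  gen_topo [set W | exists (i : nat) (A : set R),
                      W = [set y : Mhat R | A (proj1_sig y i)]].

(** QCB countable product = sequentialisation of the Tychonoff product *)
Definition Mhat_topo (R : realType) : topo (Mhat R) := seqz (Mhat_tych R).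

Definition toMhat {R : realType} (x : Mt R) : Mhat R :=
  exist _ (proj1_sig x) (proj1 (proj2_sig x)).

Definition fM {R : realType} (x : nat -> R) (k a b : nat) : bool :=
  ~~ (\sum_(a <= i < (a + b).+1) x i <= (2%:R : R) ^- k).

Definition gM {R : realType} (y : Mt R) : nat * Fan -> bool :=
  fun p => match p.2 with
           | Some (a, b) => fM (proj1_sig y) p.1 a b
           | None => false
           end.

From HB Require Import structures.
From mathcomp Require Import all_boot all_order all_algebra.
From mathcomp Require Import all_classical all_reals all_analysis.
From mathcomp Require Import ring lra.
Import Order.TTheory GRing.Theory Num.Theory.
Local Open Scope classical_set_scope.
Local Open Scope ring_scope.

(* Since M is metric, continuity of e_M can be tested on sequences y_n with
   d(x, y_n) < 2^-n.  Distinct points of M_i are at least 2^-i apart, so every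
   coordinate of y_n is eventually that of x: this is convergence in M-hat.
   For g, every point of N x F has a neighbourhood on which g(y_n) eventually
   agrees with g(x): the singleton at (k,(a,b)), where f reads only finitely
   many coordinates, and at (k,oo) a set {a > A} on which the l1-tails of x and
   of y_n are at most 2^-k, so that f vanishes there.  Finitely many such
   neighbourhoods cover a compact set, which gives convergence in the
   compact-open topology.  The same local constancy for a single y shows that
   g(y) is continuous. *)

Lemma seq_convP {T : Type} (t : topo T) (s : nat -> T) (x : T) :
  seq_conv t s x <-> forall U, t U -> U x -> \forall n \near \oo, U (s n).
Proof.
split=> sx U tU Ux; first by have [N HN] := sx U tU Ux; exists N.
by have [N _ HN] := sx U tU Ux; exists N.
Qed.

Lemma filter_forall_finite {T X : Type} {G : set_system T} {GF : Filter G}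
    {F : set (set X)} (P : set X -> T -> Prop) :
  finite_set F -> (forall V, F V -> \forall n \near G, P V n) ->
  \forall n \near G, forall V, F V -> P V n.
Proof.
move=> /finite_seqP[s ->]; elim: s => [|V s IHs] FP.
  by apply: nearW => n V; rewrite /= in_nil.
have PV : \forall n \near G, P V n by apply: FP; rewrite /= mem_head.
have Ps : \forall n \near G, forall W, [set` s] W -> P W n.
  by apply: IHs => W /= sW; apply: FP; rewrite /= inE sW orbT.
near=> n => W /=; rewrite inE => /predU1P[->|sW]; first by near: n.
by apply: (near Ps n).
Unshelve. all: by end_near.
Qed.

Lemma sub_seqz {T : Type} (t : topo T) : t `<=` seqz t.
Proof. by move=> U tU s x sx Ux; exact: sx U tU Ux. Qed.

Lemma seq_conv_seqz {T : Type} (t : topo T) (s : nat -> T) (x : T) :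
  seq_conv t s x -> seq_conv (seqz t) s x.
Proof. by move=> sx U sU Ux; exact: sU s x sx Ux. Qed.

Lemma seq_conv_qcb_prod {S T : Type} (tS : topo S) (tT : topo T)
    (s : nat -> S * T) (a : S) (b : T) :
  seq_conv tS (fst \o s) a -> seq_conv tT (snd \o s) b ->
  seq_conv (qcb_prod tS tT) s (a, b).
Proof.
move=> /seq_convP sa /seq_convP sb; apply/seq_conv_seqz/seq_convP => W hW Wab.
have [U [V [tU tV Ua Vb UVW]]] := hW _ Wab.
near=> n; apply: UVW; [exact: (near (sa U tU Ua) n)|exact: (near (sb V tV Vb) n)].
Unshelve. all: by end_near.
Qed.

Lemma seq_conv_gen_topo {T : Type} (B : set (set T)) (s : nat -> T) (x : T) :
  (forall V, B V -> V x -> \forall n \near \oo, V (s n)) ->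
  seq_conv (gen_topo B) s x.
Proof.
move=> sB; apply/seq_convP => U hU Ux; have [F [fF FB Fx FU]] := hU x Ux.
apply: filterS (fun n => FU (s n)) _.
exact: filter_forall_finite (fun V FV => sB V (FB V FV) (Fx V FV)).
Qed.

Lemma qcb_prod_discrete_slice {Y : Type} (tY : topo Y) (k : nat) (V : set Y) :
  tY V -> qcb_prod (discrete nat) tY [set w | w.1 = k /\ V w.2].
Proof.
move=> tV; apply: sub_seqz => -[k' y] /= [-> Vy].
by exists [set k], V; split => // -[? ?] /= -> ?.
Qed.

Lemma cont_locally_constant {Y Z : Type} (tY : topo Y) (tZ : topo Z)
    (h : nat * Y -> Z) :
  (forall k y, exists2 V, tY V & V y /\ forall y', V y' -> h (k, y') = h (k, y)) ->
  cont (qcb_prod (discrete nat) tY) tZ h.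
Proof.
move=> hloc W _; apply: sub_seqz => -[k y] /= Why.
have [V tV [Vy hV]] := hloc k y.
by exists [set k], V; split => // -[k' y'] /= -> /hV ->.
Qed.

Lemma seq_conv_exp_topo {X Y : Type} (tX : topo X) (tY : topo Y)
    (hs : nat -> CX tX tY) (h : CX tX tY) :
  (forall x, exists Ob, [/\ tX Ob, Ob x & \forall n \near \oo,
     forall z, Ob z -> proj1_sig (hs n) z = proj1_sig h z]) ->
  seq_conv (exp_topo tX tY) hs h.
Proof.
move=> hloc; apply/seq_conv_seqz/seq_conv_gen_topo => _ [K [U [cK tU ->]]] /= hKU.
pose C := [set Ob | tX Ob /\ \forall n \near \oo,
  forall z, Ob z -> proj1_sig (hs n) z = proj1_sig h z].
have [D [DC fD KD]] : exists D, [/\ D `<=` C, finite_set D &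
    K `<=` \bigcup_(Ob in D) Ob].
  apply: cK; first by move=> Ob [].
  by move=> x _; have [Ob [tOb Obx hOb]] := hloc x; exists Ob.
suff: \forall n \near \oo, forall Ob, D Ob ->
    forall z, Ob z -> proj1_sig (hs n) z = proj1_sig h z.
  apply: filterS => n hsD z Kz; have [Ob DOb Obz] := KD z Kz.
  by rewrite (hsD Ob DOb z Obz); apply: hKU.
exact: filter_forall_finite (fun Ob DOb => (DC Ob DOb).2).
Qed.

Lemma cont_metric_seq {R : realType} {T U : Type} (d : T -> T -> R) (r : nat -> R)
    (tU : topo U) (f : T -> U) :
  (forall n, 0 < r n) ->
  (forall x (ys : nat -> T), (forall n, d x (ys n) < r n) ->
     seq_conv tU (f \o ys) (f x)) ->
  cont (metric_topo d) tU f.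
Proof.
move=> r_gt0 fseq V tV x /= Vfx; apply: contrapT => nball.
have far n : exists y, d x y < r n /\ ~ V (f y).
  apply: contrapT => hn; apply: nball; exists (r n); split => // y dy.
  by apply: contrapT => nVy; apply: hn; exists y.
have [ys hys] := choice far.
have [N HN] := fseq x ys (fun n => (hys n).1) V tV Vfx.
exact: (hys N).2 (HN N (leqnn N)).
Qed.

Lemma seq_conv_Mhat {R : realType} (ys : nat -> Mhat R) (x : Mhat R) :
  (forall i, \forall n \near \oo, proj1_sig (ys n) i = proj1_sig x i) ->
  seq_conv (Mhat_topo R) ys x.
Proof.
move=> ys_x; apply/seq_conv_seqz/seq_conv_gen_topo => _ [i [A ->]] /= Axi.
by apply: filterS (ys_x i) => n ->.
Qed.

Section Embedding.
Variable R : realType.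

Lemma pow2V_gt0 n : 0 < (2%:R : R) ^- n.
Proof. by rewrite invr_gt0 exprn_gt0 // ltr0n. Qed.

Lemma pow2V_le {m n : nat} : (m <= n)%N -> (2%:R : R) ^- n <= 2%:R ^- m.
Proof.
move=> mn; rewrite lef_pV2 ?posrE ?exprn_gt0 ?ltr0n //.
by rewrite ler_eXn2l // ltr1n.
Qed.

Lemma pow2V_halfD k : (2%:R : R) ^- k.+1 + 2%:R ^- k.+1 = 2%:R ^- k.
Proof.
have pow2_neq0 : (2%:R : R) ^+ k != 0 by rewrite expf_neq0 // pnatr_eq0.
by rewrite exprS invfM; field; rewrite pow2_neq0.
Qed.

Lemma inMi_ge0 i (r : R) : inMi i r -> 0 <= r.
Proof. by case=> j [_ ->]; rewrite divr_ge0 // exprn_ge0 // ler0n. Qed.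

Lemma inMi_eq i (u v : R) : inMi i u -> inMi i v -> `|u - v| < 2%:R ^- i -> u = v.
Proof.
move=> [j [_ ->]] [j' [_ ->]].
have pow2_gt0 : 0 < (2%:R : R) ^+ i by rewrite exprn_gt0 // ltr0n.
rewrite -mulrBl normrM (@gtr0_norm _ (_ ^+ i)^-1) ?invr_gt0 //.
rewrite -[X in _ < X]mul1r.
rewrite ltr_pM2r ?invr_gt0 // ltr_norml => /andP[lt_j'j lt_jj'].
by case: (ltngtP j j') => [||-> //]; rewrite -(ler_nat R) -natr1 => ?; lra.
Qed.

Lemma Mt_ge0 (x : Mt R) i : 0 <= proj1_sig x i.
Proof. exact: inMi_ge0 ((proj1 (proj2_sig x)) i). Qed.

Lemma l1norm_diff_fin_num (x y : Mt R) :
  l1norm (fun i => proj1_sig x i - proj1_sig y i) \is a fin_num.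
Proof.
rewrite ge0_fin_numE; last by apply: nneseries_ge0 => n _ _; rewrite lee_fin.
apply: (@le_lt_trans _ _ (l1norm (proj1_sig x) + l1norm (proj1_sig y))%E).
  rewrite /l1norm -nneseriesD; last 2 first.
  - by move=> *; rewrite lee_fin.
  - by move=> *; rewrite lee_fin.
  apply: lee_nneseries => [n _ _|n _]; first by rewrite lee_fin.
  by rewrite -EFinD lee_fin ler_normB.
by apply: lte_add_pinfty; [exact: (proj2 (proj2_sig x))|exact: (proj2 (proj2_sig y))].
Qed.

Lemma partial_sum_le_dM (x y : Mt R) a k :
  \sum_(a <= i < k) `|proj1_sig x i - proj1_sig y i| <= dM x y.
Proof.
have sum0_le : \sum_(a <= i < k) `|proj1_sig x i - proj1_sig y i| <=
    \sum_(0 <= i < k) `|proj1_sig x i - proj1_sig y i|.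
  have [ak|ka] := leqP a k; last by rewrite big_geq ?sumr_ge0 // ltnW.
  by rewrite (big_cat_nat (leq0n a) ak) /= lerDr sumr_ge0.
apply: le_trans sum0_le _.
rewrite /dM -lee_fin fineK ?l1norm_diff_fin_num // -sumEFin.
by apply: nneseries_lim_ge => *; rewrite lee_fin.
Qed.

Lemma coord_le_dM (x y : Mt R) i : `|proj1_sig x i - proj1_sig y i| <= dM x y.
Proof. by have := partial_sum_le_dM x y i i.+1; rewrite big_nat1. Qed.

Lemma partial_sum_le_add_dM (x y : Mt R) a k :
  \sum_(a <= i < k) proj1_sig y i <= \sum_(a <= i < k) proj1_sig x i + dM x y.
Proof.
rewrite -lerBlDl -sumrB; apply: le_trans (partial_sum_le_dM x y a k).
by apply: ler_sum => i _; rewrite distrC ler_norm.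
Qed.

Lemma Mt_tail_small (x : Mt R) {e : R} : 0 < e ->
  exists A, forall a k, (A <= a)%N -> \sum_(a <= i < k) proj1_sig x i <= e.
Proof.
move=> e_gt0.
have /fine_cvgP[[N1 _ tail_fin] tail_cvg0] := @nneseries_tail_cvg R
  (fun i => (`|proj1_sig x i|)%:E) xpredT (proj2 (proj2_sig x))
  (fun k _ => ltac:(by rewrite lee_fin)).
have [N2 _ tail_lt] := cvgr_lt 0 tail_cvg0 e e_gt0.
exists (maxn N1 N2) => a k; rewrite geq_max => /andP[N1a N2a].
rewrite (eq_bigr (fun i => `|proj1_sig x i|)); last first.
  by move=> i _; rewrite ger0_norm // Mt_ge0.
rewrite -lee_fin -sumEFin; apply: le_trans (nneseries_lim_ge _ _) _.
  by move=> *; rewrite lee_fin.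
by rewrite -(fineK (tail_fin a N1a)) lee_fin ltW // tail_lt.
Qed.

Definition fan_tail (A : nat) : set Fan :=
  [set q | if q is Some (a, _) then (A < a)%N else True].

Lemma dF_lt_pow2V a b (q : Fan) : @dF R (Some (a, b)) q < 2%:R ^- a -> q = Some (a, b).
Proof.
case: q => [[a' b']|] /=; last by rewrite ltxx.
by case: eqP => [->//| _]; rewrite gt_max ltxx.
Qed.

Lemma Fan_open_single a b : Fan_topo R [set Some (a, b)].
Proof.
move=> _ ->; exists (2%:R ^- a); split; first exact: pow2V_gt0.
by move=> q /dF_lt_pow2V.
Qed.

Lemma Fan_open_tail A : Fan_topo R (fan_tail A).
Proof.
move=> [[a b]|] /= tail_ab.
  exists (2%:R ^- a); split; first exact: pow2V_gt0.
  by move=> q /dF_lt_pow2V ->.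
exists (2%:R ^- A); split => [|[[a b]|] //=]; first exact: pow2V_gt0.
by rewrite ltnNge; apply: contraTN => /pow2V_le; rewrite leNgt.
Qed.

Lemma gM_locally_constant (y : Mt R) k q : exists2 V, Fan_topo R V &
  V q /\ forall q', V q' -> gM y (k, q') = gM y (k, q).
Proof.
case: q => [[a b]|].
  by exists [set Some (a, b)]; [exact: Fan_open_single | split => // q' ->].
have [A tail_y] := Mt_tail_small y (pow2V_gt0 k).
exists (fan_tail A); [exact: Fan_open_tail | split => //].
by case=> [[a b]|] //= Aa; rewrite /gM /= /fM tail_y // ltnW.
Qed.

Lemma gM_cont (y : Mt R) : cont (NF_topo R) two_topo (gM y).
Proof. exact: cont_locally_constant (gM_locally_constant y). Qed.

Section ConvergentSequence.
Variables (x : Mt R) (ys : nat -> Mt R).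
Hypothesis dM_ys : forall n, dM x (ys n) < 2%:R ^- n.

Lemma coords_eventually_eq m : \forall n \near \oo,
  forall i, (i <= m)%N -> proj1_sig (ys n) i = proj1_sig x i.
Proof.
exists m => // n /= mn i im; apply/esym/(@inMi_eq i).
- exact: (proj1 (proj2_sig x)) i.
- exact: (proj1 (proj2_sig (ys n))) i.
apply: le_lt_trans (coord_le_dM x (ys n) i) _.
by apply: lt_le_trans (dM_ys n) _; apply/pow2V_le/(leq_trans im).
Qed.

Lemma gM_eventually_eq_locally k q : exists V, [/\ Fan_topo R V, V q &
  \forall n \near \oo, forall q', V q' -> gM (ys n) (k, q') = gM x (k, q')].
Proof.
case: q => [[a b]|].
  exists [set Some (a, b)]; split => //; first exact: Fan_open_single.
  apply: filterS (coords_eventually_eq (a + b)) => n ys_x _ ->.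
  rewrite /gM /= /fM; congr (~~ (_ <= _)).
  by apply: eq_big_nat => i /andP[_ iab]; apply: ys_x.
have [A tail_x] := Mt_tail_small x (pow2V_gt0 k.+1).
exists (fan_tail A); split => //; first exact: Fan_open_tail.
exists k.+1 => // n /= kn [[a b]|] //= Aa.
(* The tail of x is at most 2^-(k+1), and that of y_n exceeds it by at most
   d(x, y_n) < 2^-(k+1). *)
have sum_x := tail_x a (a + b).+1 (ltnW Aa).
have sum_ys := partial_sum_le_add_dM x (ys n) a (a + b).+1.
have dM_small := lt_le_trans (dM_ys n) (pow2V_le kn).
have := pow2V_halfD k; have := pow2V_le (leqnSn k) => pow2_le pow2_half.
have Sx_le : \sum_(a <= i < (a + b).+1) proj1_sig x i <= 2%:R ^- k by lra.
have Sy_le : \sum_(a <= i < (a + b).+1) proj1_sig (ys n) i <= 2%:R ^- k by lra.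
by rewrite /gM /= /fM Sx_le Sy_le.
Qed.

Lemma seq_conv_toMhat : seq_conv (Mhat_topo R) (toMhat \o ys) (toMhat x).
Proof.
apply: seq_conv_Mhat => i.
by apply: filterS (coords_eventually_eq i) => n; apply.
Qed.

Lemma seq_conv_gM : seq_conv (exp_topo (NF_topo R) two_topo)
  (fun n => exist _ (gM (ys n)) (gM_cont (ys n)) : CX _ _)
  (exist _ (gM x) (gM_cont x)).
Proof.
apply: seq_conv_exp_topo => -[k q].
have [V [tV Vq gM_eq]] := gM_eventually_eq_locally k q.
exists [set w | w.1 = k /\ V w.2]; split => //; first exact: qcb_prod_discrete_slice.
by apply: filterS gM_eq => n gM_eq_n [k' q'] /= [-> /gM_eq_n].
Qed.

End ConvergentSequence.

End Embedding.

Theorem lemma3p3 (R : realType) :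
  exists hg : forall y : Mt R, cont (NF_topo R) two_topo (gM y),
    let eM := fun y : Mt R =>
      (toMhat y, (exist _ (gM y) (hg y) : CX (NF_topo R) two_topo)) in
    injective eM /\
    cont (M_topo R) (qcb_prod (Mhat_topo R) (exp_topo (NF_topo R) two_topo)) eM.
Proof.
exists (@gM_cont R); split; first by move=> [x1 h1] [x2 h2] [x12 _]; exact: eq_exist.
apply: (cont_metric_seq _ (fun n => 2%:R ^- n)) => [|x ys dM_ys].
  exact: pow2V_gt0.
apply: seq_conv_qcb_prod; first exact: seq_conv_toMhat.
exact: seq_conv_gM.
Qed.
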